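(* Let $n\geq 2$ be a natural number and let $R\subseteq I=[0,1]$ be a nonempty perfect (closed, without isolated points) subset. Then the $n$-Split Interval $S_n(R)$ contains a subspace homeomorphic to the $n$-Split Interval $S_n(I)$.
   Context: For $n\geq 2$ and a perfect set $R\subseteq[0,1]$, the $n$-Split Interval of $R$, $S_n(R)$, is the set $R\times\{0,\ldots,n-1\}$ with the topology in which the points $(x,i)$ with $i\in\{2,\ldots,n-1\}$ are isolated, and the points $(x,0)$ and $(x,1)$ have respective basic neighbourhoods $\{(x,0)\}\cup\{(y,i): y\in R,\ z_0<y<x,\ i\in\{0,\ldots,n-1\}\}$ and $\{(x,1)\}\cup\{(y,i): y\in R,\ x<y<z_1,\ i\in\{0,\ldots,n-1\}\}$, where $z_0,z_1\in R$ with $z_0<x<z_1$; if $x=\min R$ then $(x,0)$ is isolated, and if $x=\max R$ then $(x,1)$ is isolated. $S_n(I)$ is $S_n(R)$ for $R=I=[0,1]$. *)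

From HB Require Import structures.
From mathcomp Require Import all_boot all_order all_algebra.
From mathcomp Require Import all_classical all_reals all_analysis.
Set Implicit Arguments. Unset Strict Implicit. Unset Printing Implicit Defensive.
Import Order.TTheory GRing.Theory Num.Theory.
Local Open Scope classical_set_scope.
Local Open Scope ring_scope.

(* The n-Split Interval S_n(R) of a set R of reals, as a subset of K * nat
   (the point (x,i) with x in R and i < n), together with its topology,
   given by the neighbourhood bases of the paper. *)

Definition split_carrier (K : realType) (R : set K) (n : nat) : set (K * nat) :=
  [set p | R p.1 /\ (p.2 < n)%N].

Definition split_basic (K : realType) (R : set K) (n : nat)
    (p : K * nat) (B : set (K * nat)) : Prop :=
  let x := p.1 in let i := p.2 in
  if (2 <= i)%N then B = [set p]
  else if i == 0%N then
    ((forall y, R y -> x <= y) /\ B = [set p]) \/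
    (exists z0, R z0 /\ z0 < x /\
       B = [set p] `|` [set q | R q.1 /\ z0 < q.1 /\ q.1 < x /\ (q.2 < n)%N])
  else
    ((forall y, R y -> y <= x) /\ B = [set p]) \/
    (exists z1, R z1 /\ x < z1 /\
       B = [set p] `|` [set q | R q.1 /\ x < q.1 /\ q.1 < z1 /\ (q.2 < n)%N]).

Definition split_open (K : realType) (R : set K) (n : nat) (U : set (K * nat)) : Prop :=
  U `<=` split_carrier R n /\
  forall p, U p -> exists B, split_basic R n p B /\ B `<=` U.

(* X (with carrier CX and open sets OX) is homeomorphic to a subspace of
   Y (with carrier CY and open sets OY): there is a map f : CX -> CY that is
   a homeomorphism onto its image f(CX) with the subspace topology, i.e.
   f is injective on CX and the open sets of X are exactly the preimages
   (in CX) of the open sets of Y. *)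
Definition embeds_into {A B : Type}
    (CX : set A) (OX : set A -> Prop) (CY : set B) (OY : set B -> Prop) : Prop :=
  exists f : A -> B,
    (forall a, CX a -> CY (f a)) /\
    {in CX &, injective f} /\
    (forall U, U `<=` CX ->
       (OX U <-> exists V, OY V /\ U = CX `&` (f @^-1` V))).

Definition unit_interval (K : realType) : set K := `[0, 1]%classic.

From HB Require Import structures.
From mathcomp Require Import all_boot all_order all_algebra.
From mathcomp Require Import all_classical all_reals all_analysis.
From mathcomp Require Import lra.
Set Implicit Arguments. Unset Strict Implicit. Unset Printing Implicit Defensive.
Import Order.TTheory GRing.Theory Num.Theory numFieldNormedType.Exports.
Local Open Scope classical_set_scope.
Local Open Scope ring_scope.

(** Since R is perfect, one can attach to every dyadic k / 2 ^ m of [0, 1] a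
    point V(k / 2 ^ m) of R, strictly increasing in the dyadic, such that R
    meets the open interval between any two consecutive points of a level
    (this is what allows a further point to be inserted at the next level).
    For x in [0, 1] let a x be the supremum of the V(d) with d < x and b x the
    infimum of the V(d) with d > x. As R is closed, a x and b x lie in R;
    moreover a x <= b x, and b x < a y whenever x < y since there are two
    dyadics between x and y. The map (x, 1) |-> (b x, 1), (x, i) |-> (a x, i)
    (i <> 1) is then an embedding of S_n([0, 1]) into S_n(R): it preserves the
    order of first coordinates, so it matches basic neighbourhoods, and a x is
    approached from below by the a z with z < x (dually for b). *)

Definition basis_open {T : Type} (C : set T) (basic : T -> set T -> Prop)
    (U : set T) : Prop :=
  U `<=` C /\ forall p, U p -> exists B, basic p B /\ B `<=` U.

Section BasisEmbedding.
Variables (A B : Type) (CX : set A) (basicX : A -> set A -> Prop).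
Variables (CY : set B) (basicY : B -> set B -> Prop) (f : A -> B).
Hypothesis basicY_mem : forall q V, CY q -> basicY q V -> V q.
Hypothesis basicY_sub : forall q V, CY q -> basicY q V -> V `<=` CY.
Hypothesis basicY_refine : forall q V r, CY q -> basicY q V -> V r ->
  exists W, basicY r W /\ W `<=` V.
Hypothesis f_carrier : forall p, CX p -> CY (f p).
Hypothesis f_inj : {in CX &, injective f}.
Hypothesis f_basic_preimage : forall p U, CX p -> basicX p U ->
  exists V, basicY (f p) V /\ CX `&` f @^-1` V `<=` U.
Hypothesis f_basic_image : forall p V, CX p -> basicY (f p) V ->
  exists U, basicX p U /\ U `<=` CX `&` f @^-1` V.

Lemma embeds_into_basis :
  embeds_into CX (basis_open CX basicX) CY (basis_open CY basicY).
Proof.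
exists f; split; first exact: f_carrier.
split; first exact: f_inj.
move=> U UC; split.
- move=> [_ Uopen].
  pose V := [set c | exists p W, [/\ U p, basicY (f p) W,
                                    CX `&` f @^-1` W `<=` U & W c]].
  exists V; split.
    split=> [c [p [W [Up bW _ Wc]]]|c [p [W [Up bW WU Wc]]]].
      exact: basicY_sub (f_carrier (UC _ Up)) bW _ Wc.
    have [W2 [bW2 W2W]] := basicY_refine (f_carrier (UC _ Up)) bW Wc.
    by exists W2; split=> // d W2d; exists p, W; split=> //; apply: W2W.
  apply/seteqP; split=> [p Up|p [CXp [q [W [_ _ WU Wfp]]]]]; last exact: WU.
  have [U0 [bU0 U0U]] := Uopen p Up.
  have [W [bW WU0]] := f_basic_preimage (UC _ Up) bU0.
  split; first exact: UC.
  exists p, W; split=> // [q /WU0/U0U//|].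
  exact: basicY_mem (f_carrier (UC _ Up)) bW.
- move=> [V [[_ Vopen] ->]]; split=> [p []//|p [CXp Vfp]].
  have [W [bW WV]] := Vopen _ Vfp.
  have [U0 [bU0 U0W]] := f_basic_image CXp bW.
  by exists U0; split=> // q /U0W[CXq /WV].
Qed.

End BasisEmbedding.

Lemma split_openE (K : realType) (R : set K) (n : nat) :
  split_open R n = basis_open (split_carrier R n) (split_basic R n).
Proof. by []. Qed.

Definition split_interval (K : realType) (R : set K) (n : nat) (l r : K) :
    set (K * nat) :=
  [set q | R q.1 /\ l < q.1 /\ q.1 < r /\ (q.2 < n)%N].

Section SplitBasic.
Variables (K : realType) (R : set K) (n : nat).

Lemma split_basic_isolated x i B : (2 <= i)%N ->
  split_basic R n (x, i) B <-> B = [set (x, i)].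
Proof. by rewrite /split_basic /= => ->. Qed.

Lemma split_basic_left x B : split_basic R n (x, 0%N) B <->
  ((forall y, R y -> x <= y) /\ B = [set (x, 0%N)]) \/
  exists z, [/\ R z, z < x & B = [set (x, 0%N)] `|` split_interval R n z x].
Proof.
rewrite /split_basic /=; split.
- by case=> [|[z [Rz [zx ->]]]]; [left | right; exists z].
- by case=> [|[z [Rz zx ->]]]; [left | right; exists z].
Qed.

Lemma split_basic_right x B : split_basic R n (x, 1%N) B <->
  ((forall y, R y -> y <= x) /\ B = [set (x, 1%N)]) \/
  exists z, [/\ R z, x < z & B = [set (x, 1%N)] `|` split_interval R n x z].
Proof.
rewrite /split_basic /=; split.
- by case=> [|[z [Rz [xz ->]]]]; [left | right; exists z].
- by case=> [|[z [Rz xz ->]]]; [left | right; exists z].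
Qed.

Lemma split_basic_cases p B : split_carrier R n p -> split_basic R n p B ->
  B = [set p] \/
  exists l r, [/\ R l, R r & B = [set p] `|` split_interval R n l r].
Proof.
case: p => x i [/= Rx _].
case: (ltnP 1 i) => [/split_basic_isolated->|]; first by left.
case: i => [|[|//]] _.
- case/split_basic_left => [[_ ->]|[z [Rz _ ->]]]; first by left.
  by right; exists z, x.
- case/split_basic_right => [[_ ->]|[z [Rz _ ->]]]; first by left.
  by right; exists x, z.
Qed.

Lemma split_basic_mem p B : split_carrier R n p -> split_basic R n p B -> B p.
Proof. by move=> Cp /(split_basic_cases Cp) [->|[l [r [_ _ ->]]]] //; left. Qed.

Lemma split_interval_sub l r : split_interval R n l r `<=` split_carrier R n.
Proof. by move=> q [Rq [_ [_ qn]]]. Qed.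

Lemma split_basic_sub p B : split_carrier R n p -> split_basic R n p B ->
  B `<=` split_carrier R n.
Proof.
move=> Cp /(split_basic_cases Cp) [|[l [r [_ _]]]] -> q; first by move->.
by case=> [->//|/split_interval_sub].
Qed.

Lemma split_interval_widen l r l' r' : l' <= l -> r <= r' ->
  split_interval R n l r `<=` split_interval R n l' r'.
Proof.
move=> l'l rr' q [Rq [lq [qr qn]]]; split=> //.
by split; [exact: le_lt_trans lq | split=> //; apply: lt_le_trans rr'].
Qed.

Lemma split_basic_in_interval l r q : R l -> R r -> split_interval R n l r q ->
  exists W, split_basic R n q W /\ W `<=` split_interval R n l r.
Proof.
case: q => y j Rl Rr Iq; have [/= Ry [ly [yr jn]]] := Iq.
case: (ltnP 1 j) => [j2|].
  by exists [set (y, j)]; split=> [|_ ->//]; apply/split_basic_isolated.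
case: j jn Iq => [|[|//]] jn Iq _.
- exists ([set (y, 0%N)] `|` split_interval R n l y); split.
    by apply/split_basic_left; right; exists l.
  by move=> q [->//|]; apply: split_interval_widen => //; apply: ltW.
- exists ([set (y, 1%N)] `|` split_interval R n y r); split.
    by apply/split_basic_right; right; exists r.
  by move=> q [->//|]; apply: split_interval_widen => //; apply: ltW.
Qed.

Lemma split_basic_refine p B q : split_carrier R n p -> split_basic R n p B ->
  B q -> exists W, split_basic R n q W /\ W `<=` B.
Proof.
move=> Cp bB Bq; have [->|qp] := eqVneq q p; first by exists B; split=> // ?.
move: (split_basic_cases Cp bB) Bq => [->/eqP|[l [r [Rl Rr ->]]]].
  by rewrite (negbTE qp).
case=> [/eqP|Iq]; first by rewrite (negbTE qp).
have [W [bW WI]] := split_basic_in_interval Rl Rr Iq.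
by exists W; split=> // c /WI; right.
Qed.

End SplitBasic.

Section SplitMap.
Variables (K : realType) (n : nat) (Q R : set K) (a b : K -> K).
Hypothesis a_in : forall x, Q x -> R (a x).
Hypothesis b_in : forall x, Q x -> R (b x).
Hypothesis a_le_b : forall x, Q x -> a x <= b x.
Hypothesis b_lt_a : forall x y, Q x -> Q y -> x < y -> b x < a y.
Hypothesis a_approx : forall x z w, Q x -> Q z -> z < x -> R w -> w < a x ->
  exists y, [/\ Q y, y < x & w < a y].
Hypothesis b_approx : forall x z w, Q x -> Q z -> x < z -> R w -> b x < w ->
  exists y, [/\ Q y, x < y & b y < w].

Definition split_map (p : K * nat) : K * nat :=
  if p.2 == 1%N then (b p.1, 1%N) else (a p.1, p.2).

Local Notation f := split_map.
Local Notation CQ := (split_carrier Q n).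

Lemma a_lt x y : Q x -> Q y -> x < y -> a x < a y.
Proof. by move=> Qx Qy xy; apply: le_lt_trans (a_le_b Qx) (b_lt_a Qx Qy xy). Qed.

Lemma b_lt x y : Q x -> Q y -> x < y -> b x < b y.
Proof. by move=> Qx Qy xy; apply: lt_le_trans (b_lt_a Qx Qy xy) (a_le_b Qy). Qed.

Lemma a_inj x y : Q x -> Q y -> a x = a y -> x = y.
Proof.
move=> Qx Qy axy; case: (ltgtP x y) => // xy.
- by have := a_lt Qx Qy xy; rewrite axy ltxx.
- by have := a_lt Qy Qx xy; rewrite axy ltxx.
Qed.

Lemma b_inj x y : Q x -> Q y -> b x = b y -> x = y.
Proof.
move=> Qx Qy bxy; case: (ltgtP x y) => // xy.
- by have := b_lt Qx Qy xy; rewrite bxy ltxx.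
- by have := b_lt Qy Qx xy; rewrite bxy ltxx.
Qed.

Lemma split_map_carrier p : CQ p -> split_carrier R n (f p).
Proof.
case: p => x i [/= Qx ilt]; rewrite /f /=.
by case: ifP => [/eqP i1|_]; split=> //=; [exact: b_in|rewrite -i1|exact: a_in].
Qed.

Lemma split_map_bounds x i : Q x -> a x <= (f (x, i)).1 <= b x.
Proof. by move=> Qx; rewrite /f; case: ifP => _ /=; rewrite ?lexx a_le_b. Qed.

Lemma split_map_lt_a p x : CQ p -> Q x -> ((f p).1 < a x) = (p.1 < x).
Proof.
case: p => y i [/= Qy _] Qx.
have /andP[ay yb] := split_map_bounds i Qy.
have [yx|xy] := ltP y x; first exact: le_lt_trans yb (b_lt_a Qy Qx yx).
apply/negbTE; rewrite -leNgt; apply: le_trans ay.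
by move: xy; rewrite le_eqVlt => /predU1P[->|/(a_lt Qx Qy)/ltW].
Qed.

Lemma b_lt_split_map p x : CQ p -> Q x -> (b x < (f p).1) = (x < p.1).
Proof.
case: p => y i [/= Qy _] Qx.
have /andP[ay yb] := split_map_bounds i Qy.
have [xy|yx] := ltP x y; first exact: lt_le_trans (b_lt_a Qx Qy xy) ay.
apply/negbTE; rewrite -leNgt; apply: le_trans yb _.
by move: yx; rewrite le_eqVlt => /predU1P[->|/(b_lt Qy Qx)/ltW].
Qed.

Lemma split_map_inj : {in CQ &, injective f}.
Proof.
move=> [x i] [y j]; rewrite !inE => -[/= Qx _] [/= Qy _].
rewrite /f /=; case: ifP => /eqP i1; case: ifP => /eqP j1.
all: move=> /pair_equal_spec[e ij]; try congruence.
- by rewrite (b_inj Qx Qy e) i1 j1.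
- by rewrite (a_inj Qx Qy e) ij.
Qed.

Lemma split_map_preimage1 p : CQ p -> CQ `&` f @^-1` [set f p] `<=` [set p].
Proof. by move=> Cp q [Cq fq]; apply: split_map_inj; rewrite ?inE. Qed.

Lemma split_map_intervalE z x q : Q z -> Q x -> CQ q ->
  split_interval R n (b z) (a x) (f q) <-> split_interval Q n z x q.
Proof.
move=> Qz Qx Cq; have [Rfq fqn] := split_map_carrier Cq; have [Qq qn] := Cq.
rewrite /split_interval /= b_lt_split_map // split_map_lt_a //.
by split=> -[_ [zq [qx _]]].
Qed.

Lemma split_map_basic_preimage p U : CQ p -> split_basic Q n p U ->
  exists V, split_basic R n (f p) V /\ CQ `&` f @^-1` V `<=` U.
Proof.
case: p => x i Cp; have [/= Qx ilt] := Cp.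
case: (ltnP 1 i) => [i2|]; first move/(split_basic_isolated _ _ _ _ i2)->.
  have fp : f (x, i) = (a x, i) by rewrite /f /= ifN // neq_ltn i2 orbT.
  exists [set f (x, i)]; split; last exact: (split_map_preimage1 Cp).
  by rewrite fp; apply/split_basic_isolated.
case: i ilt Cp => [|[|//]] _ Cp _.
- case/split_basic_left => [[xmin ->]|[z [Qz zx ->]]].
    have [[w [Rw wa]]|amin] := pselect (exists w, R w /\ w < a x).
      exists ([set (a x, 0%N)] `|` split_interval R n w (a x)); split.
        by apply/split_basic_left; right; exists w.
      move=> q [Cq [fq|[_ [_ [+ _]]]]]; first exact: split_map_preimage1.
      by rewrite split_map_lt_a // ltNge xmin //; case: Cq.
    exists [set (a x, 0%N)]; split; last exact: (split_map_preimage1 Cp).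
    apply/split_basic_left; left; split=> // y Ry.
    by rewrite leNgt; apply/negP => ya; apply: amin; exists y.
  exists ([set (a x, 0%N)] `|` split_interval R n (b z) (a x)); split.
    apply/split_basic_left; right; exists (b z).
    by split; [exact: b_in | exact: b_lt_a |].
  move=> q [Cq [fq|/split_map_intervalE Iq]]; last by right; apply: Iq.
  by left; apply: split_map_preimage1.
- case/split_basic_right => [[xmax ->]|[z [Qz xz ->]]].
    have [[w [Rw bw]]|bmax] := pselect (exists w, R w /\ b x < w).
      exists ([set (b x, 1%N)] `|` split_interval R n (b x) w); split.
        by apply/split_basic_right; right; exists w.
      move=> q [Cq [fq|[_ [+ _]]]]; first exact: split_map_preimage1.
      by rewrite b_lt_split_map // ltNge xmax //; case: Cq.
    exists [set (b x, 1%N)]; split; last exact: (split_map_preimage1 Cp).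
    apply/split_basic_right; left; split=> // y Ry.
    by rewrite leNgt; apply/negP => bx; apply: bmax; exists y.
  exists ([set (b x, 1%N)] `|` split_interval R n (b x) (a z)); split.
    apply/split_basic_right; right; exists (a z).
    by split; [exact: a_in | exact: b_lt_a |].
  move=> q [Cq [fq|/split_map_intervalE Iq]]; last by right; apply: Iq.
  by left; apply: split_map_preimage1.
Qed.

Lemma split_map_basic_image p V : CQ p -> split_basic R n (f p) V ->
  exists U, split_basic Q n p U /\ U `<=` CQ `&` f @^-1` V.
Proof.
move=> Cp bV; have Vfp := split_basic_mem (split_map_carrier Cp) bV.
have singleton : [set p] `<=` CQ `&` f @^-1` V by move=> _ ->.
move: Cp bV Vfp singleton; case: p => x i Cp; have [/= Qx ilt] := Cp.
case: (ltnP 1 i) => [i2 _ _ singleton|].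
  by exists [set (x, i)]; split=> //; apply/split_basic_isolated.
case: i ilt Cp => [|[|//]] _ Cp _ bV _ singleton.
- have [xmin|] := pselect (forall y, Q y -> x <= y).
    by exists [set (x, 0%N)]; split=> //; apply/split_basic_left; left.
  move=> /existsNP[z /not_implyP[Qz /negP]]; rewrite -ltNge => zx.
  case/split_basic_left: bV => [[amin _]|[w [Rw wa VE]]]; last subst V.
    by have := amin _ (a_in Qz); rewrite leNgt a_lt.
  have [y [Qy yx wy]] := a_approx Qx Qz zx Rw wa.
  exists ([set (x, 0%N)] `|` split_interval Q n y x); split.
    by apply/split_basic_left; right; exists y.
  move=> q [->|Iq]; first exact: singleton _ erefl.
  have Cq := split_interval_sub Iq; split=> //; right.
  apply: (split_interval_widen (l := b y)); rewrite ?lexx //.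
    exact: ltW (lt_le_trans wy (a_le_b Qy)).
  exact/split_map_intervalE.
- have [xmax|] := pselect (forall y, Q y -> y <= x).
    by exists [set (x, 1%N)]; split=> //; apply/split_basic_right; left.
  move=> /existsNP[z /not_implyP[Qz /negP]]; rewrite -ltNge => xz.
  case/split_basic_right: bV => [[bmax _]|[w [Rw bw VE]]]; last subst V.
    by have := bmax _ (b_in Qz); rewrite leNgt b_lt.
  have [y [Qy xy yw]] := b_approx Qx Qz xz Rw bw.
  exists ([set (x, 1%N)] `|` split_interval Q n x y); split.
    by apply/split_basic_right; right; exists y.
  move=> q [->|Iq]; first exact: singleton _ erefl.
  have Cq := split_interval_sub Iq; split=> //; right.
  apply: (split_interval_widen (r := a y)); rewrite ?lexx //.
    exact: ltW (le_lt_trans (a_le_b Qy) yw).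
  exact/split_map_intervalE.
Qed.

Lemma split_map_embeds :
  embeds_into CQ (split_open Q n) (split_carrier R n) (split_open R n).
Proof.
rewrite !split_openE; apply: (embeds_into_basis (f := split_map)).
- exact: split_basic_mem.
- exact: split_basic_sub.
- exact: split_basic_refine.
- exact: split_map_carrier.
- exact: split_map_inj.
- exact: split_map_basic_preimage.
- exact: split_map_basic_image.
Qed.

End SplitMap.

Lemma closure_inf (K : realType) (A : set K) :
  A !=set0 -> has_lbound A -> closure A (inf A).
Proof.
move=> A0 lA U /nbhs_ballP[e e0 eU].
have [y Ay ye] : exists2 y, A y & y < inf A + e by apply: inf_lt; rewrite ?ltrDl.
exists y; split=> //; apply: eU; rewrite -ball_normE /=.
have := ge_inf lA Ay; rewrite ltr_norml; lra.
Qed.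

Definition dyadic (K : realType) (m k : nat) : K := k%:R / (2 ^ m)%:R.

Section Dyadic.
Variable K : realType.
Local Notation dyadic := (dyadic K).

Lemma exp2_gt0 m : 0 < (2 ^ m)%:R :> K.
Proof. by rewrite ltr0n expn_gt0. Qed.

Lemma dyadic_ge0 m k : 0 <= dyadic m k.
Proof. by rewrite /dyadic divr_ge0. Qed.

Lemma dyadic_le1 m k : (dyadic m k <= 1) = (k <= 2 ^ m)%N.
Proof. by rewrite /dyadic ler_pdivrMr ?exp2_gt0 // mul1r ler_nat. Qed.

Lemma dyadic_lt m k m' k' :
  (dyadic m k < dyadic m' k') = (k * 2 ^ m' < k' * 2 ^ m)%N.
Proof.
rewrite /dyadic ltr_pdivrMr ?exp2_gt0 // mulrAC ltr_pdivlMr ?exp2_gt0 //.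
by rewrite -!natrM ltr_nat.
Qed.

Lemma dyadic_le m k m' k' :
  (dyadic m k <= dyadic m' k') = (k * 2 ^ m' <= k' * 2 ^ m)%N.
Proof. by rewrite leNgt dyadic_lt ltnNge negbK. Qed.

Lemma dyadic_between (x y : K) : 0 <= x -> x < y -> y <= 1 ->
  exists m k, [/\ (k <= 2 ^ m)%N, x < dyadic m k & dyadic m k < y].
Proof.
move=> x0 xy y1; have [N yxN] := ltr_add_invr xy.
pose P : K := (2 ^ N)%:R; have P0 : 0 < P := exp2_gt0 N.
have /andP[tx xt] := truncn_itv (mulr_ge0 x0 (ltW P0) : 0 <= x * P).
set t := Num.truncn (x * P) in tx xt.
have xlt : x < dyadic N t.+1 by rewrite /dyadic ltr_pdivlMr.
have lty : dyadic N t.+1 < y.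
  apply: le_lt_trans yxN.
  rewrite /dyadic -natr1 mulrDl mul1r lerD ?ler_pdivrMr //.
  by rewrite lef_pV2 ?posrE ?ltr0n ?expn_gt0 // ler_nat ltn_expl.
exists N, t.+1; split=> //; rewrite -dyadic_le1; exact/ltW/(lt_le_trans lty).
Qed.

End Dyadic.

Section DyadicEnvelope.
Variables (K : realType) (R : set K) (V : nat -> nat -> K).
Hypothesis R_closed : closed R.
Hypothesis V_in : forall m k, (k <= 2 ^ m)%N -> R (V m k).
Hypothesis V_lt : forall m k m' k', (k' <= 2 ^ m')%N ->
  dyadic K m k < dyadic K m' k' -> V m k < V m' k'.
Hypothesis V_le : forall m k m' k', (k' <= 2 ^ m')%N ->
  dyadic K m k <= dyadic K m' k' -> V m k <= V m' k'.

(* [V 0 0] keeps [below 0] nonempty, [V 0 1] keeps [above 1] nonempty. *)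
Definition below (x : K) : set K := [set y | y = V 0 0 \/
  exists m k, [/\ (k <= 2 ^ m)%N, dyadic K m k < x & y = V m k]].

Definition above (x : K) : set K := [set y | y = V 0 1 \/
  exists m k, [/\ (k <= 2 ^ m)%N, x < dyadic K m k & y = V m k]].

Definition lower_envelope (x : K) : K := sup (below x).

Definition upper_envelope (x : K) : K := inf (above x).

Lemma V_bounds m k : (k <= 2 ^ m)%N -> V 0 0 <= V m k <= V 0 1.
Proof.
move=> km; apply/andP; split; apply: V_le => //.
all: by rewrite dyadic_le expn0 muln1 ?mul0n ?mul1n.
Qed.

Lemma below_sub x : below x `<=` R.
Proof. by move=> y [->|[m [k [km _ ->]]]]; exact: V_in. Qed.

Lemma above_sub x : above x `<=` R.
Proof. by move=> y [->|[m [k [km _ ->]]]]; exact: V_in. Qed.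

Lemma below_nonempty x : below x !=set0.
Proof. by exists (V 0 0); left. Qed.

Lemma above_nonempty x : above x !=set0.
Proof. by exists (V 0 1); left. Qed.

Lemma below_le_above x y t : below x y -> above x t -> y <= t.
Proof.
case=> [->|[m [k [km kx ->]]]] [->|[m' [k' [km' xk' ->]]]].
- exact: (andP (V_bounds (isT : (1 <= 2 ^ 0)%N))).1.
- exact: (andP (V_bounds km')).1.
- exact: (andP (V_bounds km)).2.
- exact/ltW/V_lt/(lt_trans kx).
Qed.

Lemma has_ubound_below x : has_ubound (below x).
Proof. by exists (V 0 1) => y /below_le_above; apply; left. Qed.

Lemma has_lbound_above x : has_lbound (above x).
Proof. by exists (V 0 0) => t /(below_le_above (x := x)); apply; left. Qed.

Lemma lower_envelope_in x : R (lower_envelope x).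
Proof.
have -> : R = closure R by apply/closure_id.
apply: (closureS (@below_sub x)).
exact: closure_sup (below_nonempty x) (has_ubound_below x).
Qed.

Lemma upper_envelope_in x : R (upper_envelope x).
Proof.
have -> : R = closure R by apply/closure_id.
apply: (closureS (@above_sub x)).
exact: closure_inf (above_nonempty x) (has_lbound_above x).
Qed.

Lemma lower_le_upper x : lower_envelope x <= upper_envelope x.
Proof.
apply: ge_sup (below_nonempty x) _ => y By.
apply: lb_le_inf (above_nonempty x) _ => t At; exact: below_le_above By At.
Qed.

Lemma upper_lt_lower x y : 0 <= x -> x < y -> y <= 1 ->
  upper_envelope x < lower_envelope y.
Proof.
move=> x0 xy y1; have [m [k [km xk ky]]] := dyadic_between x0 xy y1.
have [m' [k' [km' kk' k'y]]] := dyadic_between (dyadic_ge0 K m k) ky y1.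
apply: (@le_lt_trans _ _ (V m k)).
  by apply: (ge_inf (has_lbound_above x)); right; exists m, k.
apply: lt_le_trans (V_lt km' kk') _.
by apply: (ub_le_sup (has_ubound_below y)); right; exists m', k'.
Qed.

Lemma lower_approx x w : 0 < x -> w < lower_envelope x ->
  exists z, [/\ 0 <= z, z < x & w < lower_envelope z].
Proof.
move=> x0 /(sup_gt (below_nonempty x)) [e [->|[m [k [km kx ->]]]] we].
  exists (x / 2); split; [lra|lra|].
  by apply: lt_le_trans we (ub_le_sup (has_ubound_below _) _); left.
have k0 := dyadic_ge0 K m k.
exists ((dyadic K m k + x) / 2); split; [lra|lra|].
apply: lt_le_trans we (ub_le_sup (has_ubound_below _) _); right; exists m, k.
by split=> //; lra.
Qed.

Lemma upper_approx x w : x < 1 -> upper_envelope x < w ->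
  exists z, [/\ x < z, z <= 1 & upper_envelope z < w].
Proof.
move=> x1 /(inf_lt (above_nonempty x)) [e [->|[m [k [km xk ->]]]] ew].
  exists ((x + 1) / 2); split; [lra|lra|].
  by apply: le_lt_trans (ge_inf (has_lbound_above _) _) ew; left.
have k1 : dyadic K m k <= 1 by rewrite dyadic_le1.
exists ((x + dyadic K m k) / 2); split; [lra|lra|].
apply: le_lt_trans (ge_inf (has_lbound_above _) _) ew; right; exists m, k.
by split=> //; lra.
Qed.

End DyadicEnvelope.

Definition has_point_between (K : realType) (R : set K) (r s : K) : Prop :=
  exists t, R t /\ r < t < s.

Definition midpoint_choice (K : realType) (R : set K) (mid : K -> K -> K) :=
  forall r s, has_point_between R r s ->
  [/\ R (mid r s), has_point_between R r (mid r s)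
    & has_point_between R (mid r s) s].

Lemma has_point_between_lt (K : realType) (R : set K) r s :
  has_point_between R r s -> r < s.
Proof. by move=> [t [_ /andP[rt ts]]]; apply: lt_trans ts. Qed.

Lemma distinct3_ordered (K : realType) (P : K -> Prop) p q s :
  P p -> P q -> P s -> p != q -> q != s -> p != s ->
  exists x y z, [/\ P x, P y, P z, x < y & y < z].
Proof.
move=> Pp Pq Ps; rewrite !neq_lt => /orP[pq|qp] /orP[qs|sq] /orP[ps|sp].
all: try by [exists p, q, s | exists p, s, q | exists q, p, s
  | exists q, s, p | exists s, p, q | exists s, q, p].
Qed.

Section PerfectSet.
Variables (K : realType) (R : set K).
Hypothesis R_perfect : perfect_set R.

Lemma perfect_point_near t e : R t -> 0 < e ->
  exists y, [/\ y != t, R y & `|t - y| < e].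
Proof.
case: R_perfect => _ lpR Rt e0; rewrite -lpR in Rt.
have [y [yt Ry]] := Rt _ (nbhsx_ballx t e e0).
by rewrite -ball_normE /=; exists y.
Qed.

Lemma perfect_split_between r s : has_point_between R r s ->
  exists m, [/\ R m, has_point_between R r m & has_point_between R m s].
Proof.
move=> [t [Rt /andP[rt ts]]].
pose e := Num.min (t - r) (s - t).
have e0 : 0 < e by rewrite lt_min !subr_gt0 rt ts.
have [t1 [t1t Rt1 tt1]] := perfect_point_near Rt e0.
have e10 : 0 < Num.min e `|t - t1|.
  by rewrite lt_min e0 normr_gt0 subr_eq0 eq_sym t1t.
have [t2 [t2t Rt2]] := perfect_point_near Rt e10.
rewrite lt_min => /andP[tt2 t2t1].
have t12 : t1 != t2 by apply: contraTneq t2t1 => ->; rewrite ltxx.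
pose P y := R y /\ r < y < s.
have Pnear y : R y -> `|t - y| < e -> P y.
  by move=> Ry; rewrite lt_min !ltr_norml => /andP[/andP[? ?] /andP[? ?]];
    split=> //; apply/andP; split; lra.
have Pt : P t by split=> //; apply/andP.
rewrite eq_sym in t2t.
have [x [y [z [[Rx /andP[rx _]] [Ry _] [Rz /andP[_ zs]] xy yz]]]] :=
  distinct3_ordered (Pnear _ Rt1 tt1) Pt (Pnear _ Rt2 tt2) t1t
    t2t t12.
by exists y; split=> //; [exists x | exists z]; split=> //; apply/andP.
Qed.

Lemma perfect_midpoint : exists mid : K -> K -> K, midpoint_choice R mid.
Proof.
have /choice[mid midP] : forall rs : K * K, exists m,
    has_point_between R rs.1 rs.2 ->
    [/\ R m, has_point_between R rs.1 m & has_point_between R m rs.2].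
  move=> [r s]; have [/perfect_split_between[m mP]|nrs] :=
    pselect (has_point_between R r s); first by exists m.
  by exists r => /nrs.
by exists (fun r s => mid (r, s)) => r s /(midP (r, s)).
Qed.

End PerfectSet.

Section DyadicTree.
Variables (K : realType) (R : set K) (mid : K -> K -> K) (u w : K).
Hypothesis mid_between : midpoint_choice R mid.
Hypotheses (Ru : R u) (Rw : R w) (uw : has_point_between R u w).

(* [dyadic_tree m k] is the point attached to the dyadic [k / 2 ^ m]. *)
Fixpoint dyadic_tree (m k : nat) : K :=
  match m with
  | 0 => if k == 0 then u else w
  | m'.+1 => if odd k then mid (dyadic_tree m' k./2) (dyadic_tree m' k./2.+1)
             else dyadic_tree m' k./2
  end.

Local Notation V := dyadic_tree.

Lemma dyadic_tree_refine m j k : V (m + j) (k * 2 ^ j) = V m k.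
Proof.
elim: j => [|j IHj]; first by rewrite addn0 expn0 muln1.
by rewrite addnS expnS mulnCA mul2n /= odd_double doubleK.
Qed.

Lemma dyadic_tree_step m k : (k < 2 ^ m)%N ->
  [/\ R (V m k), R (V m k.+1) & has_point_between R (V m k) (V m k.+1)].
Proof.
elim: m k => [|m IHm] k; first by rewrite expn0 ltnS leqn0 => /eqP ->.
move=> km; have /IHm[Rk Rk1 hk] : (k./2 < 2 ^ m)%N.
  by rewrite ltn_half_double -mul2n -expnS.
have [Rmid hl hr] := mid_between hk.
by rewrite /= uphalf_half; case: (odd k).
Qed.

Lemma dyadic_tree_last m : V m (2 ^ m) = w.
Proof. by have := dyadic_tree_refine 0 m 1; rewrite add0n mul1n. Qed.

Lemma dyadic_tree_in m k : (k <= 2 ^ m)%N -> R (V m k).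
Proof.
rewrite leq_eqVlt => /predU1P[->|/dyadic_tree_step[]//].
by rewrite dyadic_tree_last.
Qed.

Lemma dyadic_tree_lt_level m j k : (j < k)%N -> (k <= 2 ^ m)%N -> V m j < V m k.
Proof.
elim: k => [//|k IHk]; rewrite ltnS leq_eqVlt => /predU1P[->|jk] km.
  by have [_ _ /(@has_point_between_lt K)] := dyadic_tree_step km.
apply: lt_trans (IHk jk (ltnW km)) _.
by have [_ _ /(@has_point_between_lt K)] := dyadic_tree_step km.
Qed.


Lemma dyadic_tree_le_level m j k : (j <= k)%N -> (k <= 2 ^ m)%N -> V m j <= V m k.
Proof.
rewrite leq_eqVlt => /predU1P[->//|jk] km.
exact/ltW/dyadic_tree_lt_level.
Qed.

Lemma dyadic_tree_lt m k m' k' : (k' <= 2 ^ m')%N ->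
  dyadic K m k < dyadic K m' k' -> V m k < V m' k'.
Proof.
rewrite dyadic_lt => km' lt.
rewrite -(dyadic_tree_refine m m' k) -(dyadic_tree_refine m' m k') addnC.
by apply: dyadic_tree_lt_level lt _; rewrite expnD leq_pmul2r ?expn_gt0.
Qed.

Lemma dyadic_tree_le m k m' k' : (k' <= 2 ^ m')%N ->
  dyadic K m k <= dyadic K m' k' -> V m k <= V m' k'.
Proof.
rewrite dyadic_le => km' le.
rewrite -(dyadic_tree_refine m m' k) -(dyadic_tree_refine m' m k') addnC.
by apply: dyadic_tree_le_level le _; rewrite expnD leq_pmul2r ?expn_gt0.
Qed.

End DyadicTree.

Lemma unit_intervalE (K : realType) (x : K) :
  @unit_interval K x <-> 0 <= x <= 1.
Proof. by rewrite /unit_interval /= in_itv. Qed.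

Theorem mainTheorem3 (K : realType) (n : nat) (R : set K) :
  (2 <= n)%N ->
  R `<=` @unit_interval K ->
  R !=set0 ->
  perfect_set R ->
  embeds_into (split_carrier (@unit_interval K) n) (split_open (@unit_interval K) n)
              (split_carrier R n) (split_open R n).
Proof.
move=> _ _ [t Rt] R_perfect.
have [mid mid_between] := perfect_midpoint R_perfect.
have [|v [Rv [u [Ru /andP[_ uv]]] [w [Rw /andP[vw _]]]]] :=
  perfect_split_between R_perfect (r := t - 1) (s := t + 1).
  by exists t; split=> //; apply/andP; split; lra.
have uw : has_point_between R u w by exists v; split=> //; apply/andP.
pose V := dyadic_tree mid u w.
have V_in := dyadic_tree_in mid_between Ru Rw uw.
have V_lt := dyadic_tree_lt mid_between Ru Rw uw.
have V_le := dyadic_tree_le mid_between Ru Rw uw.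
have R_closed : closed R by case: R_perfect.
apply: (@split_map_embeds _ n _ _ (lower_envelope V) (upper_envelope V)).
- by move=> x _; apply: lower_envelope_in.
- by move=> x _; apply: upper_envelope_in.
- by move=> x _; apply: lower_le_upper.
- move=> x y /unit_intervalE/andP[x0 _] /unit_intervalE/andP[_ y1] xy.
  exact: upper_lt_lower.
- move=> x z r /unit_intervalE/andP[_ x1] /unit_intervalE/andP[z0 _] zx _ rx.
  have [y [y0 yx ry]] := lower_approx V_lt V_le (le_lt_trans z0 zx) rx.
  exists y; split=> //; apply/unit_intervalE.
  by rewrite y0 (ltW (lt_le_trans yx x1)).
- move=> x z r /unit_intervalE/andP[x0 _] /unit_intervalE/andP[_ z1] xz _ xr.
  have [y [xy y1 yr]] := upper_approx V_lt V_le (lt_le_trans xz z1) xr.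
  exists y; split=> //; apply/unit_intervalE.
  by rewrite y1 (ltW (le_lt_trans x0 xy)).
Qed.
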